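(* Let $A$ be an $m$-dimensional binary array of size $n_1\times\cdots\times n_m$ and $\mathbb{A}$ its periodic extension to $\mathbb{Z}^m$. If some toroidal vector $\langle h_1,\dots,h_m\rangle$ occurs at least twice in $\mathcal{T}_A$ and $h_i\neq n_i/2$ for every $i\in[m]$ (i.e. it is not in $\mathcal{H}_A$), then there is an $n_1\times\cdots\times n_m$ window of $\mathbb{A}$ having a repeated difference vector (i.e. two distinct ordered pairs of distinct dots in the window with the same difference vector).
   Context: For $n\in\mathbb{N}$, $[n]=\{1,\dots,n\}$. An $m$-dimensional binary array of size $n_1\times\cdots\times n_m$ ($m\ge2$, all $n_i\ge 2$) is a function $A:\Lambda\to\{0,1\}$ with $\Lambda=[n_1]\times\cdots\times[n_m]$; a dot is a point where $A$ equals 1. The periodic extension $\mathbb{A}:\mathbb{Z}^m\to\{0,1\}$ is $\mathbb{A}(a_1,\dots,a_m)=A(a_1',\dots,a_m')$ where $a_i'\in[n_i]$, $a_i'\equiv a_i\pmod{n_i}$. An $n_1\times\cdots\times n_m$ window of $\mathbb{A}$ is the restriction of $\mathbb{A}$ to a box $\prod_i\{k_i,\dots,k_i+n_i-1\}$, $k_i\in\mathbb{Z}$. The difference vector from a dot $\alpha=(a_1,\dots,a_m)$ to a distinct dot $\omega=(w_1,\dots,w_m)$ is $\langle w_1-a_1,\dots,w_m-a_m\rangle\in\mathbb{Z}^m$; the toroidal vector is $\langle (w_1-a_1)\bmod n_1,\dots,(w_m-a_m)\bmod n_m\rangle\in\mathbb{Z}_{n_1}\times\cdots\times\mathbb{Z}_{n_m}$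 (components taken in $\{0,\dots,n_i-1\}$). $\mathcal{T}_A$ is the multiset of toroidal vectors over all ordered pairs of distinct dots of $A$, and $\mathcal{H}_A$ is the sub-multiset of those $\langle h_1,\dots,h_m\rangle$ with $h_i=n_i/2$ for some $i\in[m]$. *)

From mathcomp Require Import all_boot all_algebra.
Set Implicit Arguments. Unset Strict Implicit. Unset Printing Implicit Defensive.
Import GRing.Theory Num.Theory.
Local Open Scope ring_scope.

(* Points of Z^m are finite functions 'I_m -> int (coordinates a_1..a_m,
   index i : 'I_m standing for coordinate i+1). *)
Definition point (m : nat) := {ffun 'I_m -> int}.

Definition inLambda (m : nat) (n : 'I_m -> nat) (p : point m) : Prop :=
  forall i, 1 <= p i <= (n i)%:Z.

Definition red (k : nat) (a : int) : int := ((a - 1) %% k%:Z)%Z + 1.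

(* An m-dimensional binary array is A : Lambda -> {0,1}; we represent it by a
   function on all of Z^m of which only the values on Lambda are ever used. *)
Definition perext (m : nat) (n : 'I_m -> nat) (A : point m -> bool)
  (x : point m) : bool :=
  A [ffun i => red (n i) (x i)].

Definition dot (m : nat) (n : 'I_m -> nat) (A : point m -> bool) (p : point m)
  : Prop := inLambda n p /\ A p.

Definition torvec (m : nat) (n : 'I_m -> nat) (alpha omega : point m)
  : point m := [ffun i => ((omega i - alpha i) %% (n i)%:Z)%Z].

Definition diffvec (m : nat) (alpha omega : point m) : point m :=
  [ffun i => omega i - alpha i].

Definition inWindow (m : nat) (n : 'I_m -> nat) (k : point m) (p : point m)
  : Prop := forall i, k i <= p i <= k i + (n i)%:Z - 1.

Definition occurs_twice_in_T (m : nat) (n : 'I_m -> nat) (A : point m -> bool)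
  (h : point m) : Prop :=
  exists a1 w1 a2 w2 : point m,
    [/\ dot n A a1, dot n A w1, dot n A a2 & dot n A w2] /\
    a1 != w1 /\ a2 != w2 /\ (a1, w1) != (a2, w2) /\
    torvec n a1 w1 = h /\ torvec n a2 w2 = h.

Definition window_has_repeated_diff (m : nat) (n : 'I_m -> nat)
  (A : point m -> bool) (k : point m) : Prop :=
  exists a1 w1 a2 w2 : point m,
    [/\ inWindow n k a1, inWindow n k w1, inWindow n k a2 & inWindow n k w2] /\
    [/\ perext n A a1, perext n A w1, perext n A a2 & perext n A w2] /\
    a1 != w1 /\ a2 != w2 /\ (a1, w1) != (a2, w2) /\
    diffvec a1 w1 = diffvec a2 w2.

(* Choose the representative d_i of h_i modulo n_i with |d_i| < n_i/2; this is
   possible exactly because h_i <> n_i/2.  Keep the first pair as (a, a + d)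
   and move the second pair to (y, y + d), where y is the copy of its first dot
   in the periodic extension lying within n_i/2 of a in every coordinate.  The
   four points then span at most n_i/2 + (n_i - 1)/2 <= n_i - 1 in coordinate
   i, so they fit in one window, and both pairs have difference vector d. *)

From mathcomp Require Import all_boot all_algebra zify.
Set Implicit Arguments. Unset Strict Implicit. Unset Printing Implicit Defensive.
Local Open Scope ring_scope.
Import GRing.Theory Num.Theory.

Lemma modzD_congr (N x x' y y' : int) :
  (x = x' %[mod N])%Z -> (y = y' %[mod N])%Z -> (x + y = x' + y' %[mod N])%Z.
Proof. by move=> ex ey; rewrite -modzDm ex ey modzDm. Qed.

Lemma red_mod (k : nat) (p q : int) : (p = q %[mod k])%Z -> red k p = red k q.
Proof. by move=> e; rewrite /red (modzD_congr e (erefl ((-1) %% k)%Z)). Qed.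

Lemma red_id (k : nat) (w : int) : 1 <= w <= k%:Z -> red k w = w.
Proof. by move=> wk; rewrite /red modz_small ?subrK //; lia. Qed.

Definition signed_mod (N : nat) (h : int) : int :=
  if 2 * h < N%:Z then h else h - N%:Z.

Definition nearest_rep (N : nat) (a b : int) : int :=
  a + ((b - a + (N %/ 2)%N%:Z) %% N%:Z)%Z - (N %/ 2)%N%:Z.

Lemma signed_mod_mod (N : nat) (h : int) : (signed_mod N h = h %[mod N])%Z.
Proof.
by rewrite /signed_mod; case: ifP => // _; rewrite -(modzMDl 1) mul1r addrC subrK.
Qed.

Lemma signed_mod_small (N : nat) (h : int) :
  0 <= h < N%:Z -> 2 * h != N%:Z -> 2 * `|signed_mod N h| < N%:Z.
Proof. by rewrite /signed_mod; case: ifP; lia. Qed.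

Lemma nearest_rep_mod (N : nat) (a b : int) : (nearest_rep N a b = b %[mod N])%Z.
Proof.
rewrite /nearest_rep addrAC addrC modzDml.
by congr (_ %% _)%Z; lia.
Qed.

Lemma nearest_rep_near (N : nat) (a b : int) :
  (0 < N)%N -> 2 * `|nearest_rep N a b - a| <= N%:Z.
Proof.
move=> N_gt0; rewrite /nearest_rep.
have N_neq0 : N%:Z != 0 by lia.
have := modz_ge0 (b - a + (N %/ 2)%N%:Z) N_neq0.
have := ltz_pmod (b - a + (N %/ 2)%N%:Z) (N_gt0 : 0 < N%:Z).
set r := (_ %% _)%Z; lia.
Qed.

Lemma nearest_signed_span (N : nat) (a b h : int) :
  (0 < N)%N -> 0 <= h < N%:Z -> 2 * h != N%:Z ->
  `|nearest_rep N a b - a| + `|signed_mod N h| <= N%:Z - 1.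
Proof.
move=> N_gt0 h_range h_half.
have := nearest_rep_near a b N_gt0; have := signed_mod_small h_range h_half.
lia.
Qed.

Lemma span_in_window (N x y d : int) :
  `|y - x| + `|d| <= N - 1 ->
  let k := Num.min x y + Num.min d 0 in
  [/\ k <= x <= k + N - 1, k <= x + d <= k + N - 1,
      k <= y <= k + N - 1 & k <= y + d <= k + N - 1].
Proof. by move=> span /=; split; lia. Qed.

Section Torus.

Variables (m : nat) (n : 'I_m -> nat).

Definition same_on_torus (p q : point m) : Prop :=
  forall i, (p i = q i %[mod (n i)%:Z])%Z.

Lemma perext_torus (A : point m -> bool) (p q : point m) :
  inLambda n q -> same_on_torus p q -> perext n A p = A q.
Proof.
move=> q_in pq; rewrite /perext; congr A; apply/ffunP => i.
by rewrite ffunE (red_mod (pq i)) (red_id (q_in i)).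
Qed.

Lemma lambda_torus_eq (p p' q q' : point m) :
  inLambda n q -> inLambda n q' -> same_on_torus p q -> same_on_torus p' q' ->
  p = p' -> q = q'.
Proof.
move=> q_in q'_in pq p'q' pp'; apply/ffunP => i.
rewrite -(red_id (q_in i)) -(red_id (q'_in i)).
by rewrite -(red_mod (pq i)) -(red_mod (p'q' i)) pp'.
Qed.

Lemma torvec_range (a w : point m) (i : 'I_m) :
  (0 < n i)%N -> 0 <= torvec n a w i < (n i)%:Z.
Proof. by move=> n_gt0; rewrite ffunE modz_ge0 ?ltz_pmod //=; lia. Qed.

Lemma torvec_mod (a w : point m) (i : 'I_m) :
  (a i + torvec n a w i = w i %[mod (n i)%:Z])%Z.
Proof. by rewrite ffunE modzDmr addrC subrK. Qed.

Lemma shift_torvec (p a w : point m) :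
  same_on_torus p a ->
  same_on_torus [ffun i => p i + signed_mod (n i) (torvec n a w i)] w.
Proof.
move=> pa i; rewrite ffunE.
by rewrite (modzD_congr (pa i) (signed_mod_mod _ _)) torvec_mod.
Qed.

End Torus.

Lemma diffvec_shift (m : nat) (p d : point m) :
  diffvec p [ffun i => p i + d i] = d.
Proof. by apply/ffunP => i; rewrite !ffunE addrC addKr. Qed.

Theorem mainTheorem2 (m : nat) (n : 'I_m -> nat) (A : point m -> bool)
  (h : point m) :
  (2 <= m)%N ->
  (forall i, (2 <= n i)%N) ->
  occurs_twice_in_T n A h ->
  (forall i, 2 * h i != (n i)%:Z) ->
  exists k : point m, window_has_repeated_diff n A k.
Proof.
move=> _ n_ge2 [a1 [w1 [a2 [w2 [[[a1_in A1] [w1_in W1] [a2_in A2] [w2_in W2]]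
  [a1w1 [a2w2 [pairs_neq [h1 h2]]]]]]]]] h_half.
have n_gt0 i : (0 < n i)%N by apply: leq_trans (n_ge2 i).
pose d := [ffun i => signed_mod (n i) (h i)].
pose y := [ffun i => nearest_rep (n i) (a1 i) (a2 i)].
pose shift p := [ffun i => p i + d i].
have a1_torus : same_on_torus n a1 a1 by [].
have y_torus : same_on_torus n y a2 by move=> i; rewrite ffunE nearest_rep_mod.
have shift_torus p a w : same_on_torus n p a -> torvec n a w = h ->
    same_on_torus n (shift p) w.
  by move=> pa ha i; have := shift_torvec w pa i; rewrite ha /shift /d !ffunE.
have w1_torus := shift_torus _ _ _ a1_torus h1.
have w2_torus := shift_torus _ _ _ y_torus h2.
have span i : `|y i - a1 i| + `|d i| <= (n i)%:Z - 1.
  rewrite !ffunE; apply: nearest_signed_span => //.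
  by rewrite -h1; apply: torvec_range.
pose k := [ffun i => Num.min (a1 i) (y i) + Num.min (d i) 0].
have windows : [/\ inWindow n k a1, inWindow n k (shift a1),
    inWindow n k y & inWindow n k (shift y)].
  by split=> i; case: (span_in_window (span i)); rewrite !ffunE.
exists k, a1, (shift a1), y, (shift y); split; first exact: windows.
split; first by rewrite !(perext_torus A _ a1_torus, perext_torus A _ w1_torus,
  perext_torus A _ y_torus, perext_torus A _ w2_torus).
split.
  by apply: contra a1w1 => /eqP /(lambda_torus_eq a1_in w1_in a1_torus w1_torus) ->.
split.
  by apply: contra a2w2 => /eqP /(lambda_torus_eq a2_in w2_in y_torus w2_torus) ->.
split; last by rewrite !diffvec_shift.
apply: contra pairs_neq => /eqP [a1y w1w2].
by rewrite (lambda_torus_eq a1_in a2_in a1_torus y_torus a1y)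
  (lambda_torus_eq w1_in w2_in w1_torus w2_torus w1w2).
Qed.
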